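(* Let $\mathbf{k}$ be a field, $p\ge3$ an integer, $S=\mathbf{k}[e_1,\dots,e_{2p}]$, $f_0=t^2+e_pt+e_{2p}$ and $f_i=e_it+e_{p+i}$ for $1\le i\le p-1$ in $S[t]$, and $I=\langle f_0,\dots,f_{p-1}\rangle\cap S$. Let $\varphi:S\to\mathbf{k}[u_1,\dots,u_p,\alpha]$ be the $\mathbf{k}$-algebra homomorphism with $\varphi(e_i)=u_i$ for $1\le i\le p-1$, $\varphi(e_p)=u_p+\alpha$, and $\varphi(e_i)=u_{i-p}\alpha$ for $p+1\le i\le 2p$. Then $I=\ker(\varphi)$. *)

From HB Require Import structures.
From mathcomp Require Import all_boot all_order all_algebra.
From mathcomp Require Import mpoly.
Set Implicit Arguments. Unset Strict Implicit. Unset Printing Implicit Defensive.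
Import GRing.Theory.
Local Open Scope ring_scope.

(* 1-indexed variables: var1 R n i = 'X_(i-1) in R[X_0..X_(n-1)], for 1 <= i <= n
   (and 0 outside that range, never used). *)
Definition var1 (R : ringType) (n i : nat) : {mpoly R[n]} :=
  match (insub i.-1 : option 'I_n) with Some j => 'X_j | None => 0 end.

Section Setup.
Variables (k : fieldType) (p : nat).

Definition S := {mpoly k[2 * p]}.
Definition e (i : nat) : S := var1 k (2 * p) i.

Definition f0 : {poly S} := 'X^2 + (e p)%:P * 'X + (e (2 * p))%:P.
Definition fi (i : nat) : {poly S} := (e i)%:P * 'X + (e (p + i))%:P.
Definition fam (i : 'I_p) : {poly S} := if val i == 0%N then f0 else fi i.

Definition inI (g : S) : Prop :=
  exists c : 'I_p -> {poly S}, g%:P = \sum_(i < p) c i * fam i.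

Definition T := {mpoly k[p.+1]}.
Definition u (i : nat) : T := var1 k p.+1 i.
Definition alpha : T := var1 k p.+1 p.+1.

Definition phi_img (j : 'I_(2 * p)) : T :=
  let i := j.+1 in
  if (i < p)%N then u i
  else if i == p then u p + alpha
  else u (i - p) * alpha.

Definition phi (g : S) : T := mmap (@mpolyC _ k) phi_img g.

End Setup.

From HB Require Import structures.
From mathcomp Require Import all_boot all_order all_algebra.
From mathcomp Require Import mpoly zify ring.
Set Implicit Arguments. Unset Strict Implicit. Unset Printing Implicit Defensive.
Import GRing.Theory.
Local Open Scope ring_scope.

(* Substituting t := -alpha after phi kills every f_i, so phi vanishes on I.
   Conversely, the k-algebra map chi : k[u, alpha] -> S[t] sending u_i to e_i
   (i < p), u_p to e_p + t and alpha to -t satisfies chi (phi e_i) = e_i modulo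
   <f_0, ..., f_{p-1}> for every i: each difference is 0, f_i or f_0.
   Hence g = chi (phi g) modulo the ideal for every g in S, and g lies in the
   ideal as soon as phi g = 0. *)

Section IdealOfFamily.
Variables (R : comPzRingType) (n : nat) (gen : 'I_n -> R).

Definition in_ideal (x : R) : Prop :=
  exists c : 'I_n -> R, x = \sum_(i < n) c i * gen i.

Lemma in_ideal0 : in_ideal 0.
Proof. by exists (fun=> 0); rewrite big1 // => i _; rewrite mul0r. Qed.

Lemma in_idealD x y : in_ideal x -> in_ideal y -> in_ideal (x + y).
Proof.
move=> [c ->] [d ->]; exists (fun i => c i + d i).
by rewrite -big_split; apply: eq_bigr => i _; rewrite mulrDl.
Qed.

Lemma in_idealMl a x : in_ideal x -> in_ideal (a * x).
Proof.
move=> [c ->]; exists (fun i => a * c i).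
by rewrite mulr_sumr; apply: eq_bigr => i _; rewrite mulrA.
Qed.

Lemma in_ideal_gen i : in_ideal (gen i).
Proof.
exists (fun j => (j == i)%:R).
by rewrite (bigD1 i) //= eqxx mul1r big1 ?addr0 // => j /negbTE ->; rewrite mul0r.
Qed.

Lemma rmorph_ideal_eq0 (A : pzRingType) (f : {rmorphism R -> A}) x :
  (forall i, f (gen i) = 0) -> in_ideal x -> f x = 0.
Proof.
move=> f_gen [c ->]; rewrite rmorph_sum big1 // => i _.
by rewrite rmorphM f_gen mulr0.
Qed.

Definition eqmod (x y : R) : Prop := in_ideal (x - y).

Lemma eqmodxx x : eqmod x x.
Proof. by rewrite /eqmod subrr; apply: in_ideal0. Qed.

Lemma eqmodD x1 y1 x2 y2 :
  eqmod x1 y1 -> eqmod x2 y2 -> eqmod (x1 + x2) (y1 + y2).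
Proof. by rewrite /eqmod opprD addrACA; apply: in_idealD. Qed.

Lemma eqmodM x1 y1 x2 y2 :
  eqmod x1 y1 -> eqmod x2 y2 -> eqmod (x1 * x2) (y1 * y2).
Proof.
move=> e1 e2; rewrite /eqmod.
have -> : x1 * x2 - y1 * y2 = x2 * (x1 - y1) + y1 * (x2 - y2) by ring.
by apply: in_idealD; apply: in_idealMl.
Qed.

Lemma eqmod_mpoly_rmorph (K : nzRingType) (m : nat)
    (f g : {rmorphism {mpoly K[m]} -> R}) :
    (forall c, f c%:MP = g c%:MP) -> (forall i, eqmod (f 'X_i) (g 'X_i)) ->
  forall q, eqmod (f q) (g q).
Proof.
move=> fgC fgX; elim/mpolyind => [|c mon q _ _ IHq].
  by rewrite !rmorph0; apply: eqmodxx.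
rewrite !rmorphD; apply: eqmodD => //.
rewrite -mul_mpolyC mpolyXE_id !rmorphM !rmorph_prod fgC.
apply: eqmodM; first exact: eqmodxx.
apply: (big_ind2 eqmod); [exact: eqmodxx | by move=> *; apply: eqmodM |].
move=> i _; rewrite !rmorphXn; elim: (mon i) => [|d IHd].
  by rewrite !expr0; apply: eqmodxx.
by rewrite !exprS; apply: eqmodM.
Qed.

End IdealOfFamily.

Lemma var1S {R : nzRingType} {n} (j : 'I_n) : var1 R n j.+1 = 'X_j.
Proof. by rewrite /var1 /= valK. Qed.

Section Proposition.
Variables (k : fieldType) (p : nat).

Local Notation S := (S k p).
Local Notation T := (T k p).
Local Notation e := (e k p).
Local Notation u := (u k p).
Local Notation alpha := (alpha k p).
Local Notation phi := (@phi k p).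
Local Notation fam := (@fam k p).
Local Notation eqmodI := (eqmod fam).

HB.instance Definition _ :=
  GRing.RMorphism.copy phi (mmap (@mpolyC _ k) (@phi_img k p)).

Lemma e_X (j : 'I_(2 * p)) : e j.+1 = 'X_j.
Proof. exact: var1S. Qed.

Lemma phi_e i : (0 < i <= 2 * p)%N ->
  phi (e i) = if (i < p)%N then u i
              else if i == p then u p + alpha else u (i - p) * alpha.
Proof.
by case: i => // i /= lti; rewrite (e_X (Ordinal lti)) /phi mmapX mmap1U.
Qed.

Lemma phi_e_p : (0 < p)%N -> phi (e p) = u p + alpha.
Proof. by move=> p_gt0; rewrite phi_e ?ltnn ?eqxx // p_gt0 leq_pmull. Qed.

Lemma phi_e_addp i : (0 < i <= p)%N -> phi (e (p + i)) = u i * alpha.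
Proof.
move=> i_range; rewrite phi_e; last by lia.
have -> : (p + i < p)%N = false by lia.
have -> : (p + i == p) = false by lia.
by rewrite addKn.
Qed.

Lemma phi_fam_root (i : 'I_p) :
  (horner_eval (- alpha) \o map_poly phi) (fam i) = 0.
Proof.
have p_gt0 : (0 < p)%N := leq_ltn_trans (leq0n i) (ltn_ord i).
rewrite /= horner_evalE /fam; case: eqP => [_ | /eqP i_neq0].
  rewrite /f0 !rmorphD rmorphM /= map_polyXn map_polyX !map_polyC !hornerE /=.
  by rewrite mul2n -addnn phi_e_addp ?leqnn ?p_gt0 // phi_e_p //; ring.
rewrite /fi rmorphD rmorphM /= map_polyX !map_polyC !hornerE /=.
have i_lt_p := ltn_ord i; have i_gt0 : (0 < i)%N by rewrite lt0n.
by rewrite phi_e_addp ?phi_e ?i_lt_p; [ring | lia | lia].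
Qed.

Lemma phi_eq0_of_inI g : inI g -> phi g = 0.
Proof.
move=> gI; have := rmorph_ideal_eq0 phi_fam_root gI.
by rewrite /= horner_evalE map_polyC hornerC.
Qed.

Definition chi_img (j : 'I_p.+1) : {poly S} :=
  if (j.+1 < p)%N then (e j.+1)%:P
  else if j.+1 == p then (e p)%:P + 'X
  else - 'X.

Definition chi : T -> {poly S} := mmap (polyC \o @mpolyC _ k) chi_img.

Lemma chi_u i : (0 < i <= p)%N ->
  chi (u i) = if (i < p)%N then (e i)%:P else (e p)%:P + 'X.
Proof.
case: i => // i /= lti; rewrite /u (var1S (Ordinal (leqW lti))).
rewrite /chi mmapX mmap1U /chi_img /=.
by move: lti; rewrite leq_eqVlt => /orP[/eqP->|->]; rewrite ?ltnn ?eqxx.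
Qed.

Lemma chi_alpha : chi alpha = - 'X.
Proof.
rewrite /alpha (var1S (@ord_max p)) /chi mmapX mmap1U /chi_img /=.
by rewrite ltnNge leqnSn (gtn_eqF (ltnSn p)).
Qed.

HB.instance Definition _ :=
  GRing.RMorphism.copy chi (mmap (polyC \o @mpolyC _ k) chi_img).

Lemma eqmod_chi_phi_e i :
  (0 < i <= 2 * p)%N -> eqmodI (e i)%:P (chi (phi (e i))).
Proof.
move=> i_range; rewrite phi_e //.
case: (ltngtP i p) => [lt_ip | lt_pi | ->].
- by rewrite chi_u ?lt_ip; [apply: eqmodxx | lia].
- have {lt_pi} [i' i'_range ->] : exists2 i', (0 < i' <= p)%N & i = (p + i')%N.
    by exists (i - p)%N; lia.
  rewrite addKn rmorphM /= chi_alpha chi_u // /eqmod.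
  have [lt_i'p | ->] : (i' < p)%N \/ i' = p by lia.
  + rewrite lt_i'p.
    suff -> : (e (p + i'))%:P - (e i')%:P * - 'X = fam (Ordinal lt_i'p).
      exact: in_ideal_gen.
    by rewrite /fam /= (_ : (i' == 0%N) = false) ?/fi; [ring | lia].
  + rewrite ltnn; have p_gt0 : (0 < p)%N by lia.
    suff -> : (e (p + p))%:P - ((e p)%:P + 'X) * - 'X = fam (Ordinal p_gt0).
      exact: in_ideal_gen.
    by rewrite /fam /= /f0 addnn -mul2n; ring.
- rewrite rmorphD /= chi_alpha chi_u ?ltnn ?eqxx ?leqnn ?addrK.
    exact: eqmodxx.
  lia.
Qed.

Lemma eqmod_chi_phi (g : S) : eqmodI g%:P (chi (phi g)).
Proof.
apply: (eqmod_mpoly_rmorph (f := polyC) (g := chi \o phi)) => [c | j] /=.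
  by rewrite /phi mmapC /chi mmapC.
by rewrite -e_X; apply: eqmod_chi_phi_e; rewrite ltn_ord.
Qed.

End Proposition.

Theorem proposition6p2 (k : fieldType) (p : nat) (hp : (3 <= p)%N) :
  forall g : S k p, inI g <-> phi g = 0.
Proof.
move=> g; split; first exact: phi_eq0_of_inI.
move=> phi_g0; have := eqmod_chi_phi g.
by rewrite phi_g0 rmorph0 /eqmod subr0.
Qed.
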